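(* Let $n \geq 1$ and $0 < k < n$ be integers, and let $M$ be an invertible $n \times n$ matrix over the field $\mathbb{F}_2 = \{0,1\}$, acting on column vectors $x \in \mathbb{F}_2^n$ (binary strings of length $n$) by matrix multiplication with arithmetic modulo $2$. Let $S_k \subseteq \mathbb{F}_2^n$ be the set of binary strings of length $n$ with Hamming weight exactly $k$. Then there do not exist two distinct positions $i \neq j$ in $\{1,\dots,n\}$ such that the $i$-th digit of $Mx$ is the same for all $x \in S_k$ and the $j$-th digit of $Mx$ is the same for all $x \in S_k$.
   Context: $\mathrm{GL}_n(\mathbb{F}_2)$ denotes the group of invertible $n\times n$ matrices over the two-element field; it is isomorphic to the group of $n$-qubit permutation unitaries generated by CNOT gates, acting on computational basis strings. *)

From mathcomp Require Import all_boot all_algebra.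
Set Implicit Arguments. Unset Strict Implicit. Unset Printing Implicit Defensive.
Import GRing.Theory.
Local Open Scope ring_scope.

Definition hweight (n : nat) (x : 'cV['F_2]_n) : nat := #|[set i | x i 0 != 0]|.

Definition S_k (n k : nat) : {set 'cV['F_2]_n} := [set x | hweight x == k].

From mathcomp Require Import all_boot all_algebra zify.
Set Implicit Arguments. Unset Strict Implicit. Unset Printing Implicit Defensive.
Import GRing.Theory.
Local Open Scope ring_scope.

(* Exchanging one 1 of a weight-k string for a 0 keeps it in S_k (this needs
   0 < k < n) and changes the i-th digit of Mx by M_ia - M_ib, so a digit
   constant on S_k comes from a constant row of M.  Over F_2 a nonzero constant
   row is the all-ones row, so two such rows of M coincide and det M = 0. *)

Lemma exists_subset_card (T : finType) (A : {set T}) (m : nat) :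
  (m <= #|A|)%N -> exists2 B : {set T}, B \subset A & #|B| = m.
Proof.
rewrite -bin_gt0 -cards_draws => /card_gt0P [B].
by rewrite inE => /andP [sBA /eqP cB]; exists B.
Qed.

Definition indicator_cV n (A : {set 'I_n}) : 'cV['F_2]_n := \col_l (l \in A)%:R.

Lemma indicator_cV_in_S_k n (A : {set 'I_n}) : indicator_cV A \in S_k n #|A|.
Proof.
rewrite inE /hweight; apply/eqP/eq_card => l.
by rewrite !inE mxE; case: (l \in A).
Qed.

Lemma mul_indicator_cV n (M : 'M['F_2]_n) i (A : {set 'I_n}) :
  (M *m indicator_cV A) i 0 = \sum_(l in A) M i l.
Proof.
rewrite mxE [RHS]big_mkcond /=; apply: eq_bigr => l _; rewrite mxE.
by case: (l \in A); rewrite ?mulr1 ?mulr0.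
Qed.

Lemma S_k_const_row n k (M : 'M['F_2]_n) i :
  (0 < k)%N -> (k < n)%N ->
  {in S_k n k &, forall x y, (M *m x) i 0 = (M *m y) i 0} ->
  forall a b, M i a = M i b.
Proof.
move=> k_gt0 lt_kn constMi a b; have [-> // | neq_ab] := eqVneq a b.
have : (k.-1 <= #|~: [set a; b]|)%N.
  by rewrite cardsCs setCK card_ord cards2 neq_ab; lia.
case/exists_subset_card => B sB cardB.
have aB : a \notin B by apply/negP => /(subsetP sB); rewrite !inE eqxx.
have bB : b \notin B by apply/negP => /(subsetP sB); rewrite !inE eqxx orbT.
have card_aB : #|a |: B| = k by rewrite cardsU1 aB cardB; lia.
have card_bB : #|b |: B| = k by rewrite cardsU1 bB cardB; lia.
have SaB : indicator_cV (a |: B) \in S_k n k by rewrite -card_aB indicator_cV_in_S_k.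
have SbB : indicator_cV (b |: B) \in S_k n k by rewrite -card_bB indicator_cV_in_S_k.
have := constMi _ _ SaB SbB.
by rewrite !mul_indicator_cV (big_setU1 _ aB) (big_setU1 _ bB) => /addIr.
Qed.

Lemma unitmx_row_neq0 (R : comUnitRingType) n (M : 'M[R]_n) r :
  M \in unitmx -> row r M != 0.
Proof.
move=> uM; apply/eqP => Mr0; have := congr1 (row r) (mulmxV uM).
rewrite row_mul Mr0 mul0mx => /rowP /(_ r).
by rewrite !mxE eqxx => /esym/eqP; rewrite oner_eq0.
Qed.

Lemma F2_neq0_eq1 (c : 'F_2) : c != 0 -> c = 1.
Proof. by case: c => [[|[|m]] lt_m2] //= _; apply: val_inj. Qed.

Lemma unitmx_F2_const_row n (M : 'M['F_2]_n) r :
  M \in unitmx -> (forall a b, M r a = M r b) -> forall a, M r a = 1.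
Proof.
move=> uM constMr a; apply: F2_neq0_eq1; apply: contra (unitmx_row_neq0 r uM).
by move=> /eqP Mra0; apply/eqP/rowP => b; rewrite !mxE (constMr b a) Mra0.
Qed.

Theorem theorem1 (n k : nat) (M : 'M['F_2]_n) :
  (1 <= n)%N -> (0 < k)%N -> (k < n)%N -> M \in unitmx ->
  ~ (exists i j : 'I_n, i != j /\
       (forall x y : 'cV['F_2]_n, x \in S_k n k -> y \in S_k n k ->
          (M *m x) i 0 = (M *m y) i 0) /\
       (forall x y : 'cV['F_2]_n, x \in S_k n k -> y \in S_k n k ->
          (M *m x) j 0 = (M *m y) j 0)).
Proof.
move=> _ k_gt0 lt_kn uM [i [j [neq_ij [constMi constMj]]]].
have Mi1 := unitmx_F2_const_row uM (S_k_const_row k_gt0 lt_kn constMi).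
have Mj1 := unitmx_F2_const_row uM (S_k_const_row k_gt0 lt_kn constMj).
have detM0 : \det M = 0.
  by apply: (determinant_alternate neq_ij) => l; rewrite Mi1 Mj1.
by move: uM; rewrite unitmxE detM0 unitr0.
Qed.
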